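(* Let $(\mathcal{S},\mathcal{A})$ be a finite directed acyclic graph with unique initial state $s_0$, unique sink state $s_f$, and terminating states $\mathcal{X}\subset\mathcal{S}$. For $i\in\{1,\dots,k\}$ let $p_{i,F}$ be a forward policy on this graph with partition function $Z_i>0$, reaching probability $u_i$, and terminating state distribution $p_i(x)=R_i(x)/Z_i$ where $R_i\ge0$. Let $\omega_1,\dots,\omega_k\ge0$, set $v_i=\omega_iZ_i/\sum_{j=1}^k\omega_jZ_j$, $u_M(s)=\sum_{i=1}^k v_iu_i(s)$, and $$p_{M,F}(s'\mid s)=\sum_{i=1}^k\frac{v_iu_i(s)}{u_M(s)}\,p_{i,F}(s'\mid s)\quad\text{for all } s\in\mathcal{S}\setminus\{s_f\}.$$ Let $p_M(s)$ (resp. $p_i(s)$) denote the probability that a trajectory sampled from $p_{M,F}$ (resp. $p_{i,F}$) terminates at state $s$. Then for all states $s$, $p_M(s)=\sum_{i=1}^k v_ip_i(s)$. Consequently, for $x\in\mathcal{X}$, $p_M(x)=\sum_{i=1}^k v_ip_i(x)\propto\sum_{i=1}^k\omega_iR_i(x)$.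
   Context: A forward policy $p_F$ assigns to each state $s\neq s_f$ a probability distribution $p_F(\cdot\mid s)$ over the children $s'$ of $s$ (states with $(s\to s')\in\mathcal{A}$); terminating states are those with an edge to $s_f$, and a trajectory terminates at $s$ if it takes the edge $s\to s_f$. Its reaching probability $u$ is defined by $u(s_0)=1$ and $u(s)=\sum_{s_*:(s_*\to s)\in\mathcal{A}}u(s_* )p_F(s\mid s_* )$ for $s\neq s_0$. The probability of terminating at $s$ equals $u(s)\,p_F(s_f\mid s)$. *)

From HB Require Import structures.
From mathcomp Require Import all_boot all_order all_algebra.
Set Implicit Arguments. Unset Strict Implicit. Unset Printing Implicit Defensive.
Import Order.TTheory GRing.Theory Num.Theory.
Local Open Scope ring_scope.

(* A finite directed graph is given by a finType S of states and an edge
   relation A : rel S (A s s' means (s -> s') is an edge). *)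

Definition flow_dag (S : finType) (A : rel S) (s0 sf : S) : Prop :=
  (forall s s', A s s' -> ~~ connect A s' s) /\
  (forall s, ~~ A s s0) /\ (forall s, connect A s0 s) /\
  (forall s, ~~ A sf s) /\ (forall s, s != sf -> exists s', A s s').

Definition terminating (S : finType) (A : rel S) (sf : S) (s : S) : bool :=
  A s sf.

Definition forward_policy (R : numDomainType) (S : finType) (A : rel S)
    (sf : S) (p : S -> S -> R) : Prop :=
  forall s, s != sf ->
    (forall s', 0 <= p s s') /\ (forall s', ~~ A s s' -> p s s' = 0) /\
    \sum_(s' : S) p s s' = 1.

Definition reaching_prob (R : numDomainType) (S : finType) (A : rel S)
    (s0 : S) (p : S -> S -> R) (u : S -> R) : Prop :=
  u s0 = 1 /\
  forall s, s != s0 -> u s = \sum_(s' : S | A s' s) u s' * p s' s.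

Definition term_prob (R : numDomainType) (S : finType)
    (p : S -> S -> R) (u : S -> R) (sf s : S) : R :=
  u s * p s sf.

(* At every state s the mixture policy is
   the u_i(s)-weighted average of the p_{i,F}(. | s), so u_M(s) p_{M,F}(s' | s)
   = sum_i v_i u_i(s) p_{i,F}(s' | s).  Summing over the parents of a state
   shows that u_M = sum_i v_i u_i satisfies the reaching-probability recursion
   of p_{M,F}; on a DAG that recursion has a unique solution, so the same
   identity with s' = s_f gives p_M(s) = sum_i v_i p_i(s).  For a terminating
   x, v_i p_i(x) = omega_i R_i(x) / sum_j omega_j Z_j. *)

From HB Require Import structures.
From mathcomp Require Import all_boot all_order all_algebra ring.
Set Implicit Arguments. Unset Strict Implicit. Unset Printing Implicit Defensive.
Import Order.TTheory GRing.Theory Num.Theory.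
Local Open Scope ring_scope.

Definition acyclic (S : finType) (A : rel S) : Prop :=
  forall s s', A s s' -> ~~ connect A s' s.

Section AcyclicInduction.

Variables (S : finType) (A : rel S).
Hypothesis A_acyclic : acyclic A.

Let ancestors (s : S) : {set S} := [set t | connect A t s].

Lemma card_ancestors_lt s s' : A s s' -> (#|ancestors s| < #|ancestors s'|)%N.
Proof.
move=> Ass'; apply/proper_card/properP; split.
  by apply/subsetP => t; rewrite !inE => /connect_trans; apply; apply: connect1.
by exists s'; rewrite !inE ?connect0 // (negbTE (A_acyclic Ass')).
Qed.

Lemma acyclic_ind (P : S -> Prop) :
  (forall s, (forall s', A s' s -> P s') -> P s) -> forall s, P s.
Proof.
move=> IH s; move: {2}#|ancestors s| (erefl #|ancestors s|) => n.
elim/ltn_ind: n s => n IHn s def_n; apply: IH => s' As's.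
by apply: (IHn #|ancestors s'|) => //; rewrite -def_n card_ancestors_lt.
Qed.

End AcyclicInduction.

Section ReachingProbability.

Variables (R : numDomainType) (S : finType) (A : rel S) (s0 sf : S).
Hypothesis A_acyclic : acyclic A.

Lemma reaching_prob_ge0 (p : S -> S -> R) (u : S -> R) :
  (forall s, ~~ A sf s) -> forward_policy A sf p -> reaching_prob A s0 p u ->
  forall s, 0 <= u s.
Proof.
move=> sf_sink p_pol [u_s0 u_rec].
elim/(acyclic_ind A_acyclic) => s IH.
have [->|s_neq0] := eqVneq s s0; first by rewrite u_s0.
rewrite u_rec //; apply: sumr_ge0 => s' As's; rewrite mulr_ge0 ?IH //.
have s'_neqf : s' != sf by apply: contraTneq As's => ->; apply: sf_sink.
by have [] := p_pol s' s'_neqf.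
Qed.

Lemma reaching_prob_unique (p : S -> S -> R) (u1 u2 : S -> R) :
  reaching_prob A s0 p u1 -> reaching_prob A s0 p u2 -> u1 =1 u2.
Proof.
move=> [u1_s0 u1_rec] [u2_s0 u2_rec].
elim/(acyclic_ind A_acyclic) => s IH.
have [->|s_neq0] := eqVneq s s0; first by rewrite u1_s0 u2_s0.
by rewrite u1_rec // u2_rec //; apply: eq_bigr => s' /IH ->.
Qed.

End ReachingProbability.

Lemma mulr_sum_normalized (R : numFieldType) (I : finType) (a b : I -> R) :
  (forall i, 0 <= a i) ->
  (\sum_i a i) * \sum_i a i / (\sum_j a j) * b i = \sum_i a i * b i.
Proof.
move=> a_ge0; have [sum_a0|sum_a_neq0] := eqVneq (\sum_i a i) 0.
  have a0 i : a i = 0 by apply: (psumr_eq0P _ sum_a0).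
  by rewrite sum_a0 mul0r big1 // => i _; rewrite a0 mul0r.
rewrite mulr_sumr; apply: eq_bigr => i _.
by rewrite [a i / _]mulrC !mulrA mulfV // mul1r.
Qed.

Section Mixture.

Variables (R : numFieldType) (S : finType) (A : rel S) (s0 sf : S).
Variables (I : finType) (p : I -> S -> S -> R) (u : I -> S -> R) (v : I -> R).
Hypothesis v_ge0 : forall i, 0 <= v i.
Hypothesis u_ge0 : forall i s, 0 <= u i s.

Definition mixture_reach (s : S) : R := \sum_i v i * u i s.

Definition mixture_policy (s s' : S) : R :=
  \sum_i v i * u i s / mixture_reach s * p i s s'.

Lemma mulr_mixture_reach_policy s s' :
  mixture_reach s * mixture_policy s s' = \sum_i v i * u i s * p i s s'.
Proof.
by rewrite mulr_sum_normalized // => i; rewrite mulr_ge0.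
Qed.

Lemma reaching_prob_mixture :
  \sum_i v i = 1 -> (forall i, reaching_prob A s0 (p i) (u i)) ->
  reaching_prob A s0 mixture_policy mixture_reach.
Proof.
move=> sum_v1 u_reach; split.
  rewrite -[RHS]sum_v1; apply: eq_bigr => i _.
  by rewrite (proj1 (u_reach i)) mulr1.
move=> s s_neq0; under eq_bigr do rewrite mulr_mixture_reach_policy.
rewrite exchange_big; apply: eq_bigr => i _.
rewrite (proj2 (u_reach i) s s_neq0) mulr_sumr.
by apply: eq_bigr => s' _; rewrite mulrA.
Qed.

Lemma term_prob_mixture s :
  term_prob mixture_policy mixture_reach sf s =
  \sum_i v i * term_prob (p i) (u i) sf s.
Proof.
rewrite /term_prob mulr_mixture_reach_policy.
by apply: eq_bigr => i _; rewrite mulrA.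
Qed.

End Mixture.

Theorem theoremA4 (R : realFieldType) (S : finType) (A : rel S) (s0 sf : S)
    (k : nat) (pF : 'I_k -> S -> S -> R) (u : 'I_k -> S -> R)
    (Z : 'I_k -> R) (Rw : 'I_k -> S -> R) (w : 'I_k -> R) (uMr : S -> R) :
  flow_dag A s0 sf ->
  (forall i, forward_policy A sf (pF i)) ->
  (forall i, reaching_prob A s0 (pF i) (u i)) ->
  (forall i, 0 < Z i) ->
  (forall i x, terminating A sf x -> 0 <= Rw i x) ->
  (forall i x, terminating A sf x -> term_prob (pF i) (u i) sf x = Rw i x / Z i) ->
  (forall i, 0 <= w i) ->
  let v := fun i => w i * Z i / \sum_(j < k) w j * Z j in
  let uM := fun s => \sum_(i < k) v i * u i s in
  let pMF := fun s s' => \sum_(i < k) v i * u i s / uM s * pF i s s' in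
  reaching_prob A s0 pMF uMr ->
  (forall s, term_prob pMF uMr sf s =
             \sum_(i < k) v i * term_prob (pF i) (u i) sf s) /\
  (forall x, terminating A sf x ->
     term_prob pMF uMr sf x = \sum_(i < k) v i * term_prob (pF i) (u i) sf x /\
     term_prob pMF uMr sf x =
       (\sum_(i < k) w i * Rw i x) / \sum_(j < k) w j * Z j).
Proof.
move=> [acyc [_ [_ [sf_sink _]]]] pF_pol u_reach Z_gt0 _ term_pF w_ge0.
move=> v uM pMF uMr_reach; set D := \sum_(j < k) w j * Z j.
have wZ_ge0 j : 0 <= w j * Z j by rewrite mulr_ge0 // ltW.
have v_ge0 i : 0 <= v i by rewrite /v divr_ge0 ?sumr_ge0.
have u_ge0 i := reaching_prob_ge0 acyc sf_sink (pF_pol i) (u_reach i).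
have term_mix s : term_prob pMF uMr sf s = \sum_i v i * term_prob (pF i) (u i) sf s.
  (* If every omega_i Z_i vanishes, then v = 0 since x / 0 = 0. *)
  have [D0|D_neq0] := eqVneq D 0.
    have v0 i : v i = 0 by rewrite /v -/D D0 invr0 mulr0.
    by rewrite /term_prob /pMF !big1 ?mulr0 // => i _; rewrite v0 !mul0r.
  have sum_v1 : \sum_i v i = 1 by rewrite -mulr_suml divff.
  have uMr_uM := reaching_prob_unique acyc uMr_reach
    (reaching_prob_mixture v_ge0 u_ge0 sum_v1 u_reach).
  by rewrite -(term_prob_mixture sf pF v_ge0 u_ge0) /term_prob uMr_uM.
split=> // x x_term; split=> //; rewrite term_mix mulr_suml.
apply: eq_bigr => i _; rewrite term_pF //.
have Z_neq0 : Z i != 0 by rewrite gt_eqF.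
by rewrite /v -[RHS]mulr1 -(divff Z_neq0); ring.
Qed.
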